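(* Let $I$ (inputs) and $O$ (outputs) be disjoint finite sets and let $\Phi_{\mathrm{CTL}^*}$ be a CTL* state formula in positive normal form over $I$ and $O$. Let $F_{\mathit{exist}}$ (resp. $F_{\mathit{univ}}$) be the set of subformulas of $\Phi_{\mathrm{CTL}^*}$ of the form $\mathsf E\varphi$ (resp. $\mathsf A\varphi$). For each $\mathsf E\varphi\in F_{\mathit{exist}}$ fix a nondeterministic B\''uchi word automaton for $\varphi$ (where state subformulas of $\varphi$ are treated as atomic propositions) with state set $Q_\varphi$, and let $k=\sum_{\mathsf E\varphi\in F_{\mathit{exist}}}|Q_\varphi|$. Introduce new outputs: for each $\mathsf E\varphi\in F_{\mathit{exist}}$ an output $v_{\mathsf E\varphi}$ ranging over $\{0,\dots,k\}$; for each $\mathsf A\varphi\in F_{\mathit{univ}}$ a Boolean output $p_{\mathsf A\varphi}$; and for each $j\in\{1,\dots,k\}$ an output $d_j$ ranging over $2^I$, where the proposition $d_j$ holds at a position iff the current input equals the current value of $d_j$. For a formula $\psi$ let $\psi'$ be obtained by replacing every maximal subformula $\mathsf E\chi$ by $v_{\mathsf E\chi}\neq0$ and every maximal subformula $\mathsf A\chi$ by $p_{\mathsf A\chi}$. Define the LTL formula $$\Phi_{\mathrm{LTL}}=\Phi'_{\mathrm{CTL}^*}\wedge\bigwedge_{\mathsf E\varphi\in F_{\mathit{exist}}}\ \bigwedge_{j=1}^{k}\mathsf G\big[v_{\mathsf E\varphi}=j\rightarrow(\mathsf G d_j\rightarrow\varphi')\big]\wedge\bigwedge_{\mathsf A\varphi\in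 F_{\mathit{univ}}}\mathsf G\big[p_{\mathsf A\varphi}\rightarrow\varphi'\big].$$ Then $\Phi_{\mathrm{CTL}^*}$ is realisable (with inputs $I$ and outputs $O$) if and only if $\Phi_{\mathrm{LTL}}$ is realisable (with inputs $I$ and outputs $O$ together with all new outputs).
   Context: A Moore system $(I,O,T,t_0,\tau,\mathit{out})$ has finite states $T$, initial state $t_0$, total transition function $\tau:T\times 2^I\to T$ and output labelling $\mathit{out}:T\to 2^O$. Its computations are words $(\mathit{out}(t_1)\cup e_1)(\mathit{out}(t_2)\cup e_2)\dots$ with $t_1=t_0$, $e_j\in 2^I$, $t_{j+1}=\tau(t_j,e_j)$; its computation tree has nodes $(2^I)^*$ with node $w$ labelled $\mathit{out}(\tau(t_0,w))$. A specification is realisable if some Moore system with the given inputs and outputs satisfies it: for an LTL formula, all computations satisfy it; for a CTL* formula, its computation tree satisfies it at the root. CTL* with inputs in positive normal form: state formulas are $\mathit{true},\mathit{false}$, outputs and negated outputs, $\wedge,\vee$ of state formulas, and $\mathsf A\varphi,\mathsf E\varphi$; path formulas are state formulas, inputs and negated inputs, $\wedge,\vee,\mathsf X,\mathsf U,\mathsf R$ of path formulas; on a tree path $n_1n_2\dots$ with $n_2=n_1\cdot e$ an input $i$ holds iff $i\in e$, and the rest of the semantics is standard. *)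

From HB Require Import structures.
From mathcomp Require Import all_boot.

Set Implicit Arguments.
Unset Strict Implicit.
Unset Printing Implicit Defensive.

(* One syntactic type; state formulas are singled out by [is_state].        *)
Inductive form (I O : Type) :=
| FTrue | FFalse
| FOut of O | FNOut of O
| FIn of I | FNIn of I              (* inputs / negated inputs (path)      *)
| FAnd of form I O & form I O
| FOr of form I O & form I O
| FX of form I O
| FU of form I O & form I O
| FR of form I O & form I O
| FA of form I O
| FE of form I O.

Arguments FTrue {I O}.
Arguments FFalse {I O}.
Arguments FOut {I O}.
Arguments FNOut {I O}.
Arguments FIn {I O}.
Arguments FNIn {I O}.

Section FormEq.
Variables (I O : countType).

Fixpoint form_code (f : form I O) : GenTree.tree (I + O) :=
  match f with
  | FTrue => GenTree.Node 0 [::]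
  | FFalse => GenTree.Node 1 [::]
  | FOut o => GenTree.Node 2 [:: GenTree.Leaf (inr o)]
  | FNOut o => GenTree.Node 3 [:: GenTree.Leaf (inr o)]
  | FIn i => GenTree.Node 4 [:: GenTree.Leaf (inl i)]
  | FNIn i => GenTree.Node 5 [:: GenTree.Leaf (inl i)]
  | FAnd a b => GenTree.Node 6 [:: form_code a; form_code b]
  | FOr a b => GenTree.Node 7 [:: form_code a; form_code b]
  | FX a => GenTree.Node 8 [:: form_code a]
  | FU a b => GenTree.Node 9 [:: form_code a; form_code b]
  | FR a b => GenTree.Node 10 [:: form_code a; form_code b]
  | FA a => GenTree.Node 11 [:: form_code a]
  | FE a => GenTree.Node 12 [:: form_code a]
  end.

Fixpoint form_decode (t : GenTree.tree (I + O)) : option (form I O) :=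
  match t with
  | GenTree.Node 0 [::] => Some FTrue
  | GenTree.Node 1 [::] => Some FFalse
  | GenTree.Node 2 [:: GenTree.Leaf (inr o)] => Some (FOut o)
  | GenTree.Node 3 [:: GenTree.Leaf (inr o)] => Some (FNOut o)
  | GenTree.Node 4 [:: GenTree.Leaf (inl i)] => Some (FIn i)
  | GenTree.Node 5 [:: GenTree.Leaf (inl i)] => Some (FNIn i)
  | GenTree.Node 6 [:: t1; t2] =>
      match form_decode t1, form_decode t2 with
      | Some a, Some b => Some (FAnd a b) | _, _ => None end
  | GenTree.Node 7 [:: t1; t2] =>
      match form_decode t1, form_decode t2 with
      | Some a, Some b => Some (FOr a b) | _, _ => None end
  | GenTree.Node 8 [:: t1] =>
      match form_decode t1 with Some a => Some (FX a) | None => None end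
  | GenTree.Node 9 [:: t1; t2] =>
      match form_decode t1, form_decode t2 with
      | Some a, Some b => Some (FU a b) | _, _ => None end
  | GenTree.Node 10 [:: t1; t2] =>
      match form_decode t1, form_decode t2 with
      | Some a, Some b => Some (FR a b) | _, _ => None end
  | GenTree.Node 11 [:: t1] =>
      match form_decode t1 with Some a => Some (FA a) | None => None end
  | GenTree.Node 12 [:: t1] =>
      match form_decode t1 with Some a => Some (FE a) | None => None end
  | _ => None
  end.

Lemma form_codeK : pcancel form_code form_decode.
Proof. by elim=> //= [a -> b ->|a -> b ->|a ->|a -> b ->|a -> b ->|a ->|a ->]. Qed.

HB.instance Definition _ := Countable.copy (form I O) (pcan_type form_codeK).
End FormEq.

Section Defs.
Variables (I O : finType).
Notation form := (form I O).

Fixpoint is_state (f : form) : bool :=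
  match f with
  | FTrue | FFalse | FOut _ | FNOut _ | FA _ | FE _ => true
  | FAnd a b | FOr a b => is_state a && is_state b
  | _ => false
  end.

Fixpoint subformulas (f : form) : seq form :=
  f :: match f with
       | FAnd a b | FOr a b | FU a b | FR a b => subformulas a ++ subformulas b
       | FX a | FA a | FE a => subformulas a
       | _ => [::]
       end.

Definition is_E (f : form) := if f is FE _ then true else false.
Definition is_A (f : form) := if f is FA _ then true else false.

Definition Fexist (Phi : form) : seq form := undup [seq g <- subformulas Phi | is_E g].
Definition Funiv (Phi : form) : seq form := undup [seq g <- subformulas Phi | is_A g].

Definition body (f : form) : form :=
  match f with FE p | FA p => p | _ => f end.

Record moore (In Out : Type) := Moore {
  mstate : finType;
  minit : mstate;
  mtrans : mstate -> In -> mstate;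
  mout : mstate -> Out }.

Fixpoint mrun In Out (M : moore In Out) (e : nat -> In) (n : nat) : mstate M :=
  if n is n'.+1 then mtrans (mrun M e n') (e n') else minit M.

Definition computation In Out (M : moore In Out) (e : nat -> In) : nat -> In * Out :=
  fun j => (e j, mout (mrun M e j)).

(* computation tree: node w : (2^I)^* labelled out(tau(t0, w)) *)
Definition comp_tree Out (M : moore {set I} Out) (w : seq {set I}) : Out :=
  mout (foldl (mtrans (m:=M)) (minit M) w).

Definition sfx T (e : nat -> T) (n : nat) : nat -> T := fun m => e (n + m).

(* [csat lab f w e]: path formula f holds on the tree path starting at node w
   and continuing with directions e 0, e 1, ... (nodes w, w.e0, w.e0.e1, ...).
   State formulas only depend on the first node w. *)
Fixpoint csat (lab : seq {set I} -> {set O}) (f : form)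
    (w : seq {set I}) (e : nat -> {set I}) : Prop :=
  match f with
  | FTrue => True
  | FFalse => False
  | FOut o => o \in lab w
  | FNOut o => o \notin lab w
  | FIn i => i \in e 0
  | FNIn i => i \notin e 0
  | FAnd a b => csat lab a w e /\ csat lab b w e
  | FOr a b => csat lab a w e \/ csat lab b w e
  | FX a => csat lab a (rcons w (e 0)) (sfx e 1)
  | FU a b => exists n, csat lab b (w ++ mkseq e n) (sfx e n) /\
                 forall m, m < n -> csat lab a (w ++ mkseq e m) (sfx e m)
  | FR a b => forall n, csat lab b (w ++ mkseq e n) (sfx e n) \/
                 exists m, m < n /\ csat lab a (w ++ mkseq e m) (sfx e m)
  | FA a => forall e' : nat -> {set I}, csat lab a w e'
  | FE a => exists e' : nat -> {set I}, csat lab a w e'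
  end.

(* state formula Phi holds at node w (the path argument is irrelevant) *)
Definition state_sat (lab : seq {set I} -> {set O}) (Phi : form) (w : seq {set I}) :=
  csat lab Phi w (fun _ => set0).

Definition ctl_realisable (Phi : form) : Prop :=
  exists M : moore {set I} {set O}, state_sat (comp_tree M) Phi [::].

Record nba (Sigma : Type) := Nba {
  nstate : finType;
  ninit : pred nstate;
  ntrans : nstate -> Sigma -> nstate -> bool;
  nacc : pred nstate }.

Definition nba_accepts Sigma (A : nba Sigma) (w : nat -> Sigma) : Prop :=
  exists r : nat -> nstate A,
    [/\ @ninit _ A (r 0), forall n, @ntrans _ A (r n) (w n) (r n.+1)
      & forall n, exists2 m, n <= m & @nacc _ A (r m)].

(* maximal state subformulas of a path formula: its atomic propositions
   (besides the inputs) *)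
Fixpoint state_atoms (f : form) : seq form :=
  if is_state f then [:: f] else
  match f with
  | FAnd a b | FOr a b | FU a b | FR a b => state_atoms a ++ state_atoms b
  | FX a => state_atoms a
  | _ => [::]
  end.

(* letters for the automaton of phi: the current input, and a valuation of the
   maximal state subformulas of phi *)
Definition nletter (phi : form) :=
  ({set I} * ({g : form | g \in state_atoms phi} -> bool))%type.

Definition atom_val (phi : form) (val : {g : form | g \in state_atoms phi} -> bool)
    (g : form) : bool :=
  if insub g is Some s then val s else false.

Fixpoint wsat (phi f : form) (w : nat -> nletter phi) : Prop :=
  if is_state f then is_true (atom_val (w 0).2 f) else
  match f with
  | FIn i => i \in (w 0).1
  | FNIn i => i \notin (w 0).1
  | FAnd a b => @wsat phi a w /\ @wsat phi b w
  | FOr a b => @wsat phi a w \/ @wsat phi b w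
  | FX a => @wsat phi a (sfx w 1)
  | FU a b => exists n, @wsat phi b (sfx w n) /\
                 forall m, m < n -> @wsat phi a (sfx w m)
  | FR a b => forall n, @wsat phi b (sfx w n) \/
                 exists m, m < n /\ @wsat phi a (sfx w m)
  | _ => False
  end.

Definition nba_for (phi : form) (A : nba (nletter phi)) : Prop :=
  forall w, nba_accepts A w <-> @wsat phi phi w.

Inductive ltl (Sigma : Type) :=
| LAtom of (Sigma -> bool)
| LNot of ltl Sigma
| LAnd of ltl Sigma & ltl Sigma
| LOr of ltl Sigma & ltl Sigma
| LX of ltl Sigma
| LU of ltl Sigma & ltl Sigma
| LR of ltl Sigma & ltl Sigma.

Fixpoint lsat Sigma (f : ltl Sigma) (w : nat -> Sigma) : Prop :=
  match f with
  | LAtom p => p (w 0)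
  | LNot a => ~ lsat a w
  | LAnd a b => lsat a w /\ lsat b w
  | LOr a b => lsat a w \/ lsat b w
  | LX a => lsat a (sfx w 1)
  | LU a b => exists n, lsat b (sfx w n) /\ forall m, m < n -> lsat a (sfx w m)
  | LR a b => forall n, lsat b (sfx w n) \/ exists m, m < n /\ lsat a (sfx w m)
  end.

Definition LTrue Sigma : ltl Sigma := LAtom (fun _ => true).
Definition LImp Sigma (a b : ltl Sigma) := LOr (LNot a) b.
Definition LG Sigma (a : ltl Sigma) := LR (LAtom (fun _ => false)) a.
Definition LBigAnd Sigma (s : seq (ltl Sigma)) := foldr (@LAnd Sigma) (LTrue Sigma) s.

Definition ltl_realisable Out (f : ltl ({set I} * Out)) : Prop :=
  exists M : moore {set I} Out, forall e : nat -> {set I}, lsat f (computation M e).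

(* new outputs: v_{E phi} in {0..k}, p_{A phi} Boolean, d_j in 2^I (j = 1..k,
   d_j is indexed by j-1 : 'I_k) *)
Record newout (Fe Fu : seq form) (k : nat) := NewOut {
  vout : {g : form | g \in Fe} -> 'I_k.+1;
  pout : {g : form | g \in Fu} -> bool;
  dout : 'I_k -> {set I} }.

Section Reduction.
Variables (Fe Fu : seq form) (k : nat).
Definition lletter := ({set I} * ({set O} * newout Fe Fu k))%type.

Definition vval (l : lletter) (g : form) : nat :=
  if insub g is Some s then vout l.2.2 s : nat else 0.
Definition pval (l : lletter) (g : form) : bool :=
  if insub g is Some s then pout l.2.2 s else false.

Fixpoint prime_form (f : form) : ltl lletter :=
  match f with
  | FTrue => LTrue _
  | FFalse => LAtom (fun _ => false)
  | FOut o => LAtom (fun l : lletter => o \in l.2.1)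
  | FNOut o => LAtom (fun l : lletter => o \notin l.2.1)
  | FIn i => LAtom (fun l : lletter => i \in l.1)
  | FNIn i => LAtom (fun l : lletter => i \notin l.1)
  | FAnd a b => LAnd (prime_form a) (prime_form b)
  | FOr a b => LOr (prime_form a) (prime_form b)
  | FX a => LX (prime_form a)
  | FU a b => LU (prime_form a) (prime_form b)
  | FR a b => LR (prime_form a) (prime_form b)
  | FA _ => LAtom (fun l : lletter => pval l f)
  | FE _ => LAtom (fun l : lletter => vval l f != 0)
  end.

(* proposition d_j (j = i+1): current input equals current value of d_j *)
Definition d_atom (i : 'I_k) : ltl lletter := LAtom (fun l : lletter => l.1 == dout l.2.2 i).
Definition veq_atom (g : form) (j : nat) : ltl lletter := LAtom (fun l : lletter => vval l g == j).
Definition p_atom (g : form) : ltl lletter := LAtom (fun l : lletter => pval l g).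

Definition Phi_LTL_of (Phi : form) : ltl lletter :=
  LAnd (prime_form Phi)
   (LAnd
     (LBigAnd [seq LG (LImp (veq_atom g i.+1)
                           (LImp (LG (d_atom i)) (prime_form (body g))))
              | g <- Fe, i : 'I_k <- enum 'I_k])
     (LBigAnd [seq LG (LImp (p_atom g) (prime_form (body g))) | g <- Fu])).
End Reduction.

Definition Phi_LTL (Phi : form) (k : nat) : ltl (lletter (Fexist Phi) (Funiv Phi) k) :=
  Phi_LTL_of (Fexist Phi) (Funiv Phi) k Phi.

Definition k_of (Phi : form) (Aut : forall g : form, nba (nletter (body g))) : nat :=
  \sum_(g <- Fexist Phi) #|nstate (Aut g)|.

End Defs.

From HB Require Import structures.
From mathcomp Require Import all_boot.
From mathcomp Require Import boolp.

Set Implicit Arguments.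
Unset Strict Implicit.
Unset Printing Implicit Defensive.

(* A Moore system realising Phi_LTL realises Phi once its new outputs are forgotten:
   by induction on formulas, phi' on a computation gives phi at the corresponding node
   of the tree, since p_{A phi} enforces phi' along every continuation and
   v_{E phi} = j provides a witness path, the one whose inputs follow d_j.

   Conversely, let M realise Phi. A state q of the Buchi automaton for phi is winning
   at a state m of M if some input sequence yields an accepting run from q, and then a
   positional strategy does: move to a winning successor, getting closer to the next
   accepting state unless q is accepting. The new system runs M and keeps k slots,
   indexed by the pairs (E phi, q); an occupied slot holds the current automaton state
   of such a play, and d_j announces its next input. When E phi holds, v_{E phi} points
   to a slot whose play is accepted, hence satisfies phi: an existing one if possible,
   otherwise a free slot started in a winning initial state. Two plays of the same
   automaton in different slots never meet under equal inputs (the older one would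
   then be accepted already), so the |Q_phi| slots of E phi never run out. *)

Section LTLSemantics.
Variable Sigma : Type.
Implicit Types (a b : ltl Sigma) (w : nat -> Sigma).

Lemma lsat_G a w : lsat (LG a) w <-> forall n, lsat a (sfx w n).
Proof. by split=> H n; [case: (H n) => // -[m []]|left; apply: H]. Qed.

Lemma lsat_Imp a b w : lsat (LImp a b) w <-> (lsat a w -> lsat b w).
Proof.
split=> [[]//|H]; have [Ha|Ha] := pselect (lsat a w); by [right; apply: H|left].
Qed.

Lemma lsat_LBigAnd_map (T : eqType) (s : seq T) (F : T -> ltl Sigma) w :
  lsat (LBigAnd (map F s)) w <-> (forall x, x \in s -> lsat (F x) w).
Proof.
elim: s => [|a s IH] /=; first by [].
rewrite IH; split=> [[Fa Fs] x|H].
  by rewrite in_cons => /orP[/eqP->|/Fs].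
by split=> [|x xs]; apply: H; rewrite in_cons ?eqxx ?xs ?orbT.
Qed.

Lemma lsat_LBigAnd_cat (s1 s2 : seq (ltl Sigma)) w :
  lsat (LBigAnd (s1 ++ s2)) w <-> lsat (LBigAnd s1) w /\ lsat (LBigAnd s2) w.
Proof. by elim: s1 => [|a s IH] /=; [split=> [|[]]|rewrite IH; tauto]. Qed.

Lemma lsat_LBigAnd_allpairs (S T : eqType) (s : seq S) (t : seq T)
    (F : S -> T -> ltl Sigma) w :
  lsat (LBigAnd [seq F x y | x <- s, y <- t]) w <->
  (forall x y, x \in s -> y \in t -> lsat (F x y) w).
Proof.
elim: s => [|a s IH] //.
rewrite allpairs_cons lsat_LBigAnd_cat lsat_LBigAnd_map IH; split.
  move=> [Fa Fs] x y; rewrite in_cons => /orP[/eqP->|xs]; [exact: Fa|exact: Fs].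
by move=> H; split=> [y|x y xs]; apply: H; rewrite ?in_cons ?eqxx ?xs ?orbT.
Qed.

End LTLSemantics.

Section MooreRuns.
Variables (In Out : Type) (M : moore In Out).
Implicit Types (s : mstate M) (e : nat -> In).

Definition restart s : moore In Out := Moore s (@mtrans _ _ M) (@mout _ _ M).

Lemma mrun_restart_minit e n : mrun (restart (minit M)) e n = mrun M e n.
Proof. by elim: n => //= n ->. Qed.

Lemma computation_restart_minit e : computation (restart (minit M)) e = computation M e.
Proof. by apply: funext => j; rewrite /computation mrun_restart_minit. Qed.

Lemma mrun_restartD s e n m :
  mrun (restart s) e (n + m) = mrun (restart (mrun (restart s) e n)) (sfx e n) m.
Proof. by elim: m => [|m IH]; rewrite ?addn0 // addnS /= IH. Qed.

Lemma computation_restart_sfx s e n :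
  sfx (computation (restart s) e) n =
  computation (restart (mrun (restart s) e n)) (sfx e n).
Proof. by apply: funext => j; rewrite /sfx /computation mrun_restartD. Qed.

Lemma foldl_mtrans_mkseq s e n :
  foldl (@mtrans _ _ M) s (mkseq e n) = mrun (restart s) e n.
Proof. by elim: n => [|n IH] //; rewrite mkseqS foldl_rcons IH. Qed.

Lemma eq_mrun e e' n : (forall i, i < n -> e i = e' i) -> mrun M e n = mrun M e' n.
Proof. by elim: n => //= n IH ee'; rewrite IH ?ee' // => i /ltnW/ee'. Qed.

End MooreRuns.

Section CTLstar.
Variables (I O : finType).
Implicit Types (f g Phi : form I O) (lab : seq {set I} -> {set O}).

Lemma csat_cat lab f w u e :
  csat lab f (w ++ u) e <-> csat (fun x => lab (w ++ x)) f u e.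
Proof.
elim: f u e => //= [a IHa b IHb|a IHa b IHb|a IHa|a IHa b IHb|a IHa b IHb|a IHa|a IHa] u e;
  rewrite ?rcons_cat; try setoid_rewrite <- catA;
  by setoid_rewrite IHa; try setoid_rewrite IHb.
Qed.

Lemma csat_state_path lab f w e e' :
  is_state f -> csat lab f w e -> csat lab f w e'.
Proof.
elim: f => //= [a IHa b IHb|a IHa b IHb] /andP[sa sb]; first by case; split; auto.
by case; [left|right]; auto.
Qed.

Lemma subformulas_trans f g :
  g \in subformulas f -> {subset subformulas g <= subformulas f}.
Proof.
elim: f => [||o|o|i|i|a IHa b IHb|a IHa b IHb|a IHa|a IHa b IHb|a IHa b IHb|a IHa|a IHa] /=;
  rewrite in_cons => /orP[/eqP-> //|gf] h hg; rewrite in_cons //.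
all: try by rewrite (IHa gf h hg) orbT.
all: by move: gf; rewrite !mem_cat => /orP[/IHa|/IHb] /(_ h hg) ->; rewrite ?orbT.
Qed.

Lemma body_subformulas Phi g :
  g \in subformulas Phi -> all (mem (subformulas Phi)) (subformulas (body g)).
Proof.
move/subformulas_trans => sub; apply/allP => h h_in; apply: sub.
by case: g h_in => //= a h_in; rewrite in_cons h_in orbT.
Qed.

Lemma mem_Fexist Phi g : (g \in Fexist Phi) = (g \in subformulas Phi) && is_E g.
Proof. by rewrite mem_undup mem_filter andbC. Qed.

Lemma mem_Funiv Phi g : (g \in Funiv Phi) = (g \in subformulas Phi) && is_A g.
Proof. by rewrite mem_undup mem_filter andbC. Qed.

End CTLstar.

Section LTLtoCTL.
Variables (I O : finType) (Phi : form I O) (k : nat).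
Local Notation Fe := (Fexist Phi).
Local Notation Fu := (Funiv Phi).
Local Notation prime := (prime_form Fe Fu k).
Variable M : moore {set I} ({set O} * newout Fe Fu k).
Hypothesis M_realises : forall e, lsat (Phi_LTL Phi k) (computation M e).

Definition forget_new_outputs : moore {set I} {set O} :=
  Moore (minit M) (@mtrans _ _ M) (fun s => (mout s).1).

Definition node_state (w : seq {set I}) : mstate M := foldl (@mtrans _ _ M) (minit M) w.

Local Notation comp_at w e := (computation (restart (node_state w)) e).

Lemma comp_at_sfx w e n : sfx (comp_at w e) n = comp_at (w ++ mkseq e n) (sfx e n).
Proof. by rewrite computation_restart_sfx -foldl_mtrans_mkseq /node_state foldl_cat. Qed.

Definition prepend (w : seq {set I}) (e : nat -> {set I}) : nat -> {set I} :=
  fun n => if n < size w then nth set0 w n else e (n - size w).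

Lemma computation_prepend w e :
  sfx (computation M (prepend w e)) (size w) = comp_at w e.
Proof.
have sfx_prepend : sfx (prepend w e) (size w) = e.
  by apply: funext => j; rewrite /sfx /prepend ltnNge leq_addr addKn.
have mkseq_prepend : mkseq (prepend w e) (size w) = w.
  rewrite -[RHS](mkseq_nth set0); apply/eq_in_map => j.
  by rewrite mem_iota /prepend => /andP[_ ->].
rewrite -computation_restart_minit computation_restart_sfx sfx_prepend.
by rewrite -foldl_mtrans_mkseq mkseq_prepend.
Qed.

Lemma univ_conjunct_at w e g : g \in Fu ->
  pval (comp_at w e 0) g -> lsat (prime (body g)) (comp_at w e).
Proof.
move=> Hg Hp; have [_ [_ /lsat_LBigAnd_map /(_ g Hg) /lsat_G]] := M_realises (prepend w e).
by move/(_ (size w)); rewrite computation_prepend lsat_Imp; apply.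
Qed.

Lemma exist_conjunct_at w e g (i : 'I_k) : g \in Fe ->
  vval (comp_at w e 0) g = i.+1 ->
  (forall n, lsat (d_atom Fe Fu i) (sfx (comp_at w e) n)) ->
  lsat (prime (body g)) (comp_at w e).
Proof.
move=> Hg Hv Hd.
have [_ [/lsat_LBigAnd_allpairs /(_ g i Hg (mem_enum _ i)) /lsat_G HE _]] :=
  M_realises (prepend w e).
move: (HE (size w)); rewrite computation_prepend !lsat_Imp lsat_G.
by move=> /(_ (introT eqP Hv)); apply.
Qed.

Lemma csat_of_prime_form (f : form I O) : all (mem (subformulas Phi)) (subformulas f) ->
  forall w e, lsat (prime f) (comp_at w e) -> csat (comp_tree forget_new_outputs) f w e.
Proof.
elim: f => //= [a IHa b IHb|a IHa b IHb|a IHa|a IHa b IHb|a IHa b IHb|a IHa|a IHa] /andP[Hf];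
  rewrite ?all_cat; [move=> /andP[Ha Hb]|move=> /andP[Ha Hb]|move=> Ha|
  move=> /andP[Ha Hb]|move=> /andP[Ha Hb]|move=> Ha|move=> Ha] => w e.
- by case; split; [exact: IHa|exact: IHb].
- by case; [left; exact: IHa|right; exact: IHb].
- by rewrite comp_at_sfx -cats1 => /IHa; apply.
- move=> [n [Hbn Ham]]; exists n; split; first by apply: IHb; rewrite // -comp_at_sfx.
  by move=> m /Ham; rewrite comp_at_sfx; apply: IHa.
- move=> H n; case: (H n) => [|[m [lt_mn]]]; rewrite comp_at_sfx => Hn.
    by left; apply: IHb.
  by right; exists m; split=> //; apply: IHa.
- move=> Hp e'; apply: IHa => //; apply: (univ_conjunct_at (g := FA a)) => //.
  by rewrite mem_Funiv Hf.
- have HE : FE a \in Fe by rewrite mem_Fexist Hf.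
  rewrite /vval insubT /=; set j := vout _ _ => Hj.
  have lt_jk : j.-1 < k by move: (ltn_ord j) Hj; case: (nat_of_ord j).
  pose i := Ordinal lt_jk.
  pose d_i (s : mstate M) := dout (mout s).2 i.
  pose follow n := iter n (fun s => mtrans s (d_i s)) (node_state w).
  have run_follow n : mrun (restart (node_state w)) (d_i \o follow) n = follow n.
    by elim: n => //= n ->.
  exists (d_i \o follow); apply: IHa => //.
  apply: (exist_conjunct_at (g := FE a) (i := i)) => //.
    by rewrite /vval insubT /= prednK // lt0n.
  by move=> n; rewrite /= /sfx /computation /= addn0 run_follow.
Qed.

Lemma forget_new_outputs_realise : state_sat (comp_tree forget_new_outputs) Phi [::].
Proof.
apply: csat_of_prime_form; first by apply/allP.
by have [] := M_realises (fun _ => set0); rewrite computation_restart_minit.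
Qed.

End LTLtoCTL.

Lemma ctl_realisable_of_ltl (I O : finType) (Phi : form I O) k :
  ltl_realisable (Phi_LTL Phi k) -> ctl_realisable Phi.
Proof. by case=> M HM; exists (forget_new_outputs M); apply: forget_new_outputs_realise. Qed.

Section BuchiRuns.
Variables (Sigma : Type) (A : nba Sigma).
Implicit Types (w : nat -> Sigma) (r : nat -> nstate A).

Definition accepting_run w r :=
  (forall n, ntrans (r n) (w n) (r n.+1)) /\ forall n, exists2 m, n <= m & nacc (r m).

Definition accepts_from w q := exists2 r, r 0 = q & accepting_run w r.

Lemma accepting_run_sfx w r n : accepting_run w r -> accepting_run (sfx w n) (sfx r n).
Proof.
move=> [Htr Hacc]; split=> j; first by rewrite /sfx addnS; apply: Htr.
have [m le_m acc_m] := Hacc (n + j); have le_nm := leq_trans (leq_addr j n) le_m.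
by exists (m - n); rewrite ?leq_subRL // /sfx subnKC.
Qed.

Lemma nba_acceptsE w : nba_accepts A w <-> exists2 q, ninit q & accepts_from w q.
Proof.
split=> [[r [init_r Htr Hacc]]|[q init_q [r r0 [Htr Hacc]]]].
  by exists (r 0) => //; exists r.
by exists r; rewrite r0.
Qed.

End BuchiRuns.

Section BuchiStrategy.
Variables (I : finType) (Y Sigma : Type) (M : moore {set I} Y).
Variables (lab : mstate M -> {set I} -> Sigma) (A : nba Sigma).
Local Notation S := (mstate M).
Local Notation Q := (nstate A).
Local Notation step := (@mtrans _ _ M).
Implicit Types (s : S) (p q : Q) (e : nat -> {set I}).

Definition lword s e : nat -> Sigma := fun n => lab (mrun (restart s) e n) (e n).

Lemma lword_sfx s e n : sfx (lword s e) n = lword (mrun (restart s) e n) (sfx e n).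
Proof. by apply: funext => j; rewrite /lword /sfx mrun_restartD. Qed.

Definition winning s q := exists e, accepts_from (lword s e) q.

Definition accepting_at s q n :=
  exists e r, [/\ r 0 = q, accepting_run (lword s e) r & nacc (r n)].

Lemma rank_exists s q : exists n, `[< winning s q -> accepting_at s q n >].
Proof.
have [[e [r r0 [Htr Hacc]]]|not_win] := pselect (winning s q); last first.
  by exists 0; apply/asboolP.
by have [n _ acc_n] := Hacc 0; exists n; apply/asboolP => _; exists e, r.
Qed.

(* The least [n] such that some accepting run from [q] is in an accepting state at
   time [n]; it is [0] when [q] is not winning. *)
Definition rank s q : nat := ex_minn (rank_exists s q).

Lemma rankP s q : winning s q ->
  accepting_at s q (rank s q) /\ forall n, accepting_at s q n -> rank s q <= n.
Proof.
rewrite /rank => win; case: ex_minnP => n /asboolP /(_ win) acc_n min_n.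
by split=> // m acc_m; apply: min_n; apply/asboolP.
Qed.

Definition good_move s q (xq : {set I} * Q) :=
  [/\ ntrans q (lab s xq.1) xq.2, winning (step s xq.1) xq.2
    & nacc q \/ rank (step s xq.1) xq.2 < rank s q].

Definition strategy s q : {set I} * Q :=
  odflt (set0, q) [pick xq | `[< good_move s q xq >]].

Lemma strategy_good s q : winning s q -> good_move s q (strategy s q).
Proof.
move=> win; have [[e [r [r0 run_r acc_rank]]] min_rank] := rankP win.
have run' : accepting_run (lword (step s (e 0)) (sfx e 1)) (sfx r 1).
  by rewrite -[lword _ _](lword_sfx s e 1); apply: accepting_run_sfx.
have win' : winning (step s (e 0)) (r 1) by exists (sfx e 1), (sfx r 1).
rewrite /strategy; case: pickP => [xq /asboolP //|no_good]; exfalso.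
move/negbT/asboolPn: (no_good (e 0, r 1)); apply; split=> //=.
  by rewrite -r0; apply: run_r.1.
move: acc_rank min_rank; case: (rank s q) => [|c] acc_c min_rank; first by left; rewrite -r0.
right; rewrite ltnS; apply: (proj2 (rankP win')).
by exists (sfx e 1), (sfx r 1).
Qed.

Definition strategy_step (sq : S * Q) : S * Q :=
  (step sq.1 (strategy sq.1 sq.2).1, (strategy sq.1 sq.2).2).

Definition play s q n : S * Q := iter n strategy_step (s, q).

Definition play_input s q n : {set I} := (strategy (play s q n).1 (play s q n).2).1.

Lemma play_succ s q n :
  play s q n.+1 = play (strategy_step (s, q)).1 (strategy_step (s, q)).2 n.
Proof. by rewrite /play iterSr; case: (strategy_step (s, q)). Qed.

Lemma play_input_succ s q n :
  play_input s q n.+1 = play_input (strategy_step (s, q)).1 (strategy_step (s, q)).2 n.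
Proof. by rewrite /play_input play_succ. Qed.

Lemma play_fst s q n : (play s q n).1 = mrun (restart s) (play_input s q) n.
Proof. by elim: n => //= n <-. Qed.

Lemma winning_play s q n : winning s q -> winning (play s q n).1 (play s q n).2.
Proof. by move=> win; elim: n => //= n /strategy_good[]. Qed.

Lemma accepts_from_play s q : winning s q -> accepts_from (lword s (play_input s q)) q.
Proof.
move=> win; have good n := strategy_good (winning_play n win).
exists (fun n => (play s q n).2) => //; split=> n.
  by rewrite /lword -play_fst; case: (good n).
suff: forall d n, rank (play s q n).1 (play s q n).2 <= d ->
    exists2 j, n <= j & nacc (play s q j).2 by apply.
elim=> [|d IH] {}n le_rank; case: (good n) => _ _ [acc_n|lt_rank]; try by exists n.
  by move: le_rank; rewrite leqn0 => /eqP rank0; rewrite rank0 in lt_rank.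
have [j le_j acc_j] := IH n.+1 (leq_trans lt_rank le_rank).
by exists j => //; apply: ltnW.
Qed.

Lemma accepts_play s q : ninit q -> winning s q -> nba_accepts A (lword s (play_input s q)).
Proof. by move=> init_q /accepts_from_play acc; apply/nba_acceptsE; exists q. Qed.

Lemma play_input_meet s p q n :
  (forall i, i < n -> play_input s p i = play_input s q i) ->
  (play s p n).2 = (play s q n).2 -> play_input s p = play_input s q.
Proof.
move=> same_inputs same_state.
have same_pos : play s p n = play s q n.
  rewrite [play s p n]surjective_pairing [play s q n]surjective_pairing !play_fst.
  by rewrite same_state (eq_mrun _ same_inputs).
apply: funext => i; have [/same_inputs //|le_ni] := ltnP i n.
by rewrite /play_input /play -(subnK le_ni) !iterD -!/(play _ _ n) same_pos.
Qed.

End BuchiStrategy.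

Section StateAtoms.
Variables (I O : finType) (M : moore {set I} {set O}).
Local Notation S := (mstate M).
Implicit Types (m : S) (f g phi : form I O) (e : nat -> {set I}).

Definition holds m f := state_sat (comp_tree (restart m)) f [::].

Lemma csat_restart m f w e :
  csat (comp_tree (restart m)) f w e <->
  csat (comp_tree (restart (foldl (@mtrans _ _ M) m w))) f [::] e.
Proof.
rewrite -{1}[w]cats0 csat_cat; suff -> : (fun x => comp_tree (restart m) (w ++ x)) =
  comp_tree (restart (foldl (@mtrans _ _ M) m w)) by [].
by apply: funext => x; rewrite /comp_tree /= foldl_cat.
Qed.

Definition letter phi m (x : {set I}) : nletter phi :=
  (x, fun a : {g | g \in state_atoms phi} => `[< holds m (val a) >]).

Local Notation word phi := (lword (letter phi)).

Lemma state_atoms_state f : is_state f -> state_atoms f = [:: f].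
Proof. by case: f => //= a b ->. Qed.

Lemma wsat_state phi f (w : nat -> nletter phi) : is_state f -> wsat f w = atom_val (w 0).2 f.
Proof. by case: f => //= a b ->. Qed.

Lemma wsat_csat_atom phi f m e : is_state f -> f \in state_atoms phi ->
  wsat f (word phi m e) <-> csat (comp_tree (restart m)) f [::] e.
Proof.
move=> st_f f_atom; rewrite wsat_state // /atom_val insubT /=.
by split=> [/asboolP|] H; [|apply/asboolP]; apply: csat_state_path H.
Qed.

Lemma wsat_csat phi f : {subset state_atoms f <= state_atoms phi} ->
  forall m e, wsat f (word phi m e) <-> csat (comp_tree (restart m)) f [::] e.
Proof.
have atom g : is_state g -> {subset state_atoms g <= state_atoms phi} -> forall m e,
    wsat g (word phi m e) <-> csat (comp_tree (restart m)) g [::] e.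
  move=> st_g sub_g m e; apply: wsat_csat_atom => //.
  by apply: sub_g; rewrite state_atoms_state ?mem_head.
have shift g : (forall m e, wsat g (word phi m e) <-> csat (comp_tree (restart m)) g [::] e) ->
    forall m e n, wsat g (sfx (word phi m e) n) <->
                  csat (comp_tree (restart m)) g (mkseq e n) (sfx e n).
  by move=> IH m e n; rewrite lword_sfx IH (csat_restart m g (mkseq e n)) foldl_mtrans_mkseq.
have sub_cat a b : {subset state_atoms a ++ state_atoms b <= state_atoms phi} ->
    {subset state_atoms a <= state_atoms phi} /\ {subset state_atoms b <= state_atoms phi}.
  by move=> sub; split=> g g_in; apply: sub; rewrite mem_cat g_in ?orbT.
elim: f => [||o|o|i|i|a IHa b IHb|a IHa b IHb|a IHa|a IHa b IHb|a IHa b IHb|a IHa|a IHa]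
  sub_f m e; try by [apply: atom|].
- case st: (is_state (FAnd a b)); first by apply: atom; rewrite ?st.
  move: sub_f; rewrite /= in st *; rewrite st => /sub_cat[sub_a sub_b].
  by rewrite IHa ?IHb.
- case st: (is_state (FOr a b)); first by apply: atom; rewrite ?st.
  move: sub_f; rewrite /= in st *; rewrite st => /sub_cat[sub_a sub_b].
  by rewrite IHa ?IHb.
- by rewrite /= (shift a (IHa sub_f) m e 1).
- have [/IHa/shift Ka /IHb/shift Kb] := sub_cat _ _ sub_f.
  by rewrite /=; setoid_rewrite Ka; setoid_rewrite Kb.
- have [/IHa/shift Ka /IHb/shift Kb] := sub_cat _ _ sub_f.
  by rewrite /=; setoid_rewrite Ka; setoid_rewrite Kb.
Qed.

End StateAtoms.

Section Acceptance.
Variables (I O : finType) (M : moore {set I} {set O}).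
Variables (phi : form I O) (A : nba (nletter phi)).
Hypothesis A_phi : nba_for A.
Local Notation word := (lword (letter phi)).

Lemma accepts_word (m : mstate M) e :
  nba_accepts A (word m e) <-> csat (comp_tree (restart m)) phi [::] e.
Proof. by rewrite A_phi wsat_csat. Qed.

Lemma winning_initial (m : mstate M) :
  (exists e, csat (comp_tree (restart m)) phi [::] e) ->
  exists2 q : nstate A, ninit q & winning (letter phi) m q.
Proof.
move=> [e /accepts_word /nba_acceptsE [q init_q acc_q]].
by exists q => //; exists e.
Qed.

End Acceptance.

Section CTLtoLTL.
Variables (I O : finType) (Phi : form I O).
Variable Aut : forall g : form I O, nba (nletter (body g)).
Hypothesis Aut_body : forall g, g \in Fexist Phi -> nba_for (Aut g).
Variable M : moore {set I} {set O}.
Local Notation S := (mstate M).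
Local Notation Fe := (Fexist Phi).
Local Notation Fu := (Funiv Phi).
Local Notation k := (k_of Phi Aut).
Local Notation prime := (prime_form Fe Fu k).

Definition Eform (t : 'I_(size Fe)) : form I O := nth FTrue Fe t.
Local Notation Aut_t t := (Aut (Eform t)).
Local Notation lab t := (@letter I O M (body (Eform t))).

Lemma Eform_in t : Eform t \in Fe.
Proof. exact: mem_nth. Qed.

Lemma Eform_E t : Eform t = FE (body (Eform t)).
Proof. by move: (Eform_in t); rewrite mem_Fexist => /andP[_]; case: (Eform t). Qed.

(* Tracks serve both as names of the [k] slots (the indices of the outputs [d_j])
   and as slot contents: an existential subformula with a state of its automaton. *)
Definition track := {t : 'I_(size Fe) & nstate (Aut_t t)}.
Local Notation track_at q := (Tagged (fun t => nstate (Aut_t t)) q).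

Lemma card_track : #|{: track}| = k.
Proof.
rewrite card_tagged /k_of sumnE big_map big_enum /= (big_nth FTrue) big_mkord.
exact: eq_bigr.
Qed.

Definition index_of_track (c : track) : 'I_k := cast_ord card_track (enum_rank c).
Definition track_of_index (j : 'I_k) : track := enum_val (cast_ord (esym card_track) j).

Lemma index_of_trackK : cancel index_of_track track_of_index.
Proof. by move=> c; rewrite /track_of_index /index_of_track cast_ordK enum_rankK. Qed.

Implicit Types (m : S) (c s : track) (e : nat -> {set I}).

Definition tinput m c : nat -> {set I} := play_input (lab (tag c)) m (tagged c).
Definition tstate m c n : track := track_at (play (lab (tag c)) m (tagged c) n).2.

Lemma tstate0 m c : tstate m c 0 = c.
Proof. by case: c. Qed.

Lemma tinput_succ m c n : tinput m c n.+1 = tinput (mtrans m (tinput m c 0)) (tstate m c 1) n.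
Proof. exact: play_input_succ. Qed.

Lemma tstate_succ m c n : tstate m c n.+1 = tstate (mtrans m (tinput m c 0)) (tstate m c 1) n.
Proof. by rewrite /tstate play_succ. Qed.

Definition accepting_track m c : bool :=
  `[< nba_accepts (Aut_t (tag c)) (lword (lab (tag c)) m (tinput m c)) >].

Definition never_meet m c1 c2 := forall n,
  (forall i, i < n -> tinput m c1 i = tinput m c2 i) -> tstate m c1 n != tstate m c2 n.

Lemma never_meet_irrefl m c : ~ never_meet m c c.
Proof. by move/(_ 0 (fun i (lt_i0 : i < 0) => erefl)); rewrite eqxx. Qed.

Lemma never_meet_sym m c1 c2 : never_meet m c1 c2 -> never_meet m c2 c1.
Proof. by move=> H n same; rewrite eq_sym; apply: H => i /same. Qed.

Lemma never_meet_fresh m t (p q : nstate (Aut_t t)) :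
  ninit q -> winning (lab t) m q -> ~~ accepting_track m (track_at p) ->
  never_meet m (track_at p) (track_at q).
Proof.
move=> init_q win_q /asboolPn not_acc n same; rewrite /tstate eq_Tagged /=.
apply/eqP => meet; apply: not_acc; rewrite /tinput /= (play_input_meet same meet).
exact: accepts_play.
Qed.

Definition slots_ok m (f : track -> option track) :=
  (forall s c, f s = Some c -> tag c = tag s) /\
  (forall s1 s2 c1 c2, s1 != s2 -> f s1 = Some c1 -> f s2 = Some c2 ->
     tag c1 = tag c2 -> never_meet m c1 c2).

Implicit Types (f : track -> option track) (t : 'I_(size Fe)).

Definition needed m t : bool := `[< holds m (Eform t) >].

Definition reusable m f t : option track :=
  [pick s | if f s is Some c then (tag c == t) && accepting_track m c else false].

Definition fresh_state m t : option (nstate (Aut_t t)) :=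
  [pick q | ninit q && `[< winning (lab t) m q >]].

Definition free_slot f t : option track := [pick s | (tag s == t) && (f s == None)].

Definition new_track m f t : option (track * track) :=
  if needed m t && (reusable m f t == None) then
    if free_slot f t is Some s then omap (fun q => (s, track_at q)) (fresh_state m t)
    else None
  else None.

Definition active m f s : option track :=
  if f s is Some c then Some c else
  if new_track m f (tag s) is Some (s', c) then (if s' == s then Some c else None)
  else None.

Definition witness_slot m f t : option track :=
  if needed m t then
    if reusable m f t is Some s then Some s else omap fst (new_track m f t)
  else None.

Lemma reusable_None m f t s c : reusable m f t = None -> f s = Some c -> tag c = t ->
  ~~ accepting_track m c.
Proof.
rewrite /reusable; case: pickP => // no_s _ fs tc.
by move: (no_s s); rewrite fs tc eqxx /= => ->.
Qed.

Lemma new_trackP m f t s c : new_track m f t = Some (s, c) ->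
  [/\ needed m t, reusable m f t = None, tag s = t, f s = None &
      exists2 q : nstate (Aut_t t), c = track_at q & ninit q /\ winning (lab t) m q].
Proof.
rewrite /new_track; case: ifP => // /andP[need /eqP no_reuse].
rewrite /free_slot; case: pickP => // s' /andP[/eqP ts' /eqP fs'].
rewrite /fresh_state; case: pickP => //= q /andP[init_q /asboolP win_q] [<- <-].
by split=> //; exists q.
Qed.

Lemma activeP m f s c : active m f s = Some c ->
  f s = Some c \/ f s = None /\ new_track m f (tag s) = Some (s, c).
Proof.
rewrite /active; case: (f s) => [c'|]; first by left.
by case E: (new_track _ _ _) => [[s' c']|] //; case: eqP => // <- [<-]; right.
Qed.

Lemma slots_ok_active m f : slots_ok m f -> slots_ok m (active m f).
Proof.
move=> [tag_f meet_f]; split.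
  by move=> s c /activeP [/tag_f //|[_ /new_trackP [_ _ _ _ [q -> _]]]].
have fresh_case s1 s2 c1 c2 : f s1 = Some c1 -> f s2 = None ->
    new_track m f (tag s2) = Some (s2, c2) -> tag c1 = tag c2 -> never_meet m c1 c2.
  move=> fs1 _ /new_trackP [_ no_reuse _ _ [q -> [init_q win_q]]] /= tc1.
  move: c1 fs1 tc1 => [t1 p] fs1 /= tc1; subst t1.
  by apply: never_meet_fresh => //; apply: reusable_None no_reuse fs1 _.
move=> s1 s2 c1 c2 s12 /activeP[fs1|[fs1 new1]] /activeP[fs2|[fs2 new2]] tc.
- exact: meet_f s12 fs1 fs2 tc.
- exact: fresh_case fs1 fs2 new2 tc.
- by apply/never_meet_sym/(fresh_case _ _ _ _ fs2 fs1 new1).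
have [_ _ _ _ [q1 c1q1 _]] := new_trackP new1.
have [_ _ _ _ [q2 c2q2 _]] := new_trackP new2.
have ts : tag s1 = tag s2 by move: tc; rewrite c1q1 c2q2.
by move: new1; rewrite ts new2 => -[s21]; rewrite s21 eqxx in s12.
Qed.

(* Pigeonhole: the |Q_t| slots of tag [t] cannot all hold tracks, since those
   tracks are pairwise distinct and none is the fresh initial state. *)
Lemma free_slot_exists m f t q : slots_ok m f -> reusable m f t = None ->
  fresh_state m t = Some q -> exists s, free_slot f t = Some s.
Proof.
move=> [tag_f meet_f] no_reuse.
rewrite /fresh_state; case: pickP => //= q' /andP[init_q /asboolP win_q] [q'q]; subst q'.
rewrite /free_slot; case: pickP => [s _|no_free]; first by exists s.
pose B := [set s : track | tag s == t].
have busy s : s \in B -> exists c, f s = Some c.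
  by rewrite inE => ts; move: (no_free s); rewrite ts /=; case: (f s) => [c|] // _; exists c.
pose content s := odflt s (f s).
have content_inj : {in B &, injective content}.
  move=> s1 s2 /busy[c1 fs1] /busy[c2 fs2]; rewrite /content fs1 fs2 /= => c12.
  apply/eqP/negPn/negP => s12; apply: (never_meet_irrefl (m := m) (c := c1)).
  by apply: meet_f s12 fs1 _ _; rewrite c12.
have content_sub : content @: B \subset B :\ track_at q.
  apply/subsetP => _ /imsetP[s /[dup] sB /busy[c fs] ->]; move: sB.
  rewrite !inE /content fs /= => /eqP ts; have tc : tag c = t by rewrite (tag_f _ _ fs).
  rewrite tc eqxx andbT; apply/eqP => cq; move: (reusable_None no_reuse fs tc).
  by rewrite cq => /asboolPn; apply; apply: accepts_play.
have := subset_leq_card content_sub; rewrite card_in_imset //.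
by rewrite (cardsD1 (track_at q) B) inE eqxx add1n ltnn.
Qed.

Definition next_slots m f x : {ffun track -> option track} :=
  [ffun s => if active m f s is Some c then
               if tinput m c 0 == x then Some (tstate m c 1) else None
             else None].

Lemma slots_ok_next m f x :
  slots_ok m (active m f) -> slots_ok (mtrans m x) (next_slots m f x).
Proof.
move=> [tag_f meet_f]; split=> [s c'|s1 s2 c1' c2' s12]; rewrite /next_slots ?ffunE.
  case E: (active m f s) => [c|] //; case: eqP => // _ [<-]; exact: tag_f E.
have shift c : tinput m c 0 = x ->
    (forall n, tstate (mtrans m x) (tstate m c 1) n = tstate m c n.+1) /\
    (forall i, tinput (mtrans m x) (tstate m c 1) i = tinput m c i.+1).
  by move=> <-; split=> n; rewrite [RHS](tstate_succ, tinput_succ).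
case E1: (active m f s1) => [c1|] //; case: eqP => // x1 [<-].
case E2: (active m f s2) => [c2|] //; case: eqP => // x2 [<-] tc n same.
have [[st1 in1] [st2 in2]] := (shift _ x1, shift _ x2).
rewrite st1 st2; apply: (meet_f _ _ _ _ s12 E1 E2 tc n.+1).
by case=> [_|i lt_in]; [rewrite x1 x2|rewrite -in1 -in2 same].
Qed.

Definition index_E (g : {g | g \in Fe}) : 'I_(size Fe) :=
  Ordinal (etrans (index_mem (val g) Fe) (valP g)).

Lemma Eform_index_E (g : {g | g \in Fe}) : Eform (index_E g) = val g.
Proof. exact: nth_index (valP g). Qed.

Local Notation state := (S * {ffun track -> option track})%type.

Definition new_outputs (st : state) : newout Fe Fu k :=
  NewOut
    (fun g => if witness_slot st.1 st.2 (index_E g) is Some s then lift ord0 (index_of_track s)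
              else ord0)
    (fun g => `[< holds st.1 (val g) >])
    (fun j => if active st.1 st.2 (track_of_index j) is Some c then tinput st.1 c 0 else set0).

Definition ltl_machine : moore {set I} ({set O} * newout Fe Fu k) :=
  Moore (minit M, [ffun => None]) (fun st x => (mtrans st.1 x, next_slots st.1 st.2 x))
    (fun st => (mout st.1, new_outputs st)).

Local Notation run st e n := (mrun (restart (M := ltl_machine) st) e n).
Local Notation comp st e := (computation (restart (M := ltl_machine) st) e).

Lemma run_fst (st : state) e n : (run st e n).1 = mrun (restart st.1) e n.
Proof. by elim: n => //= n ->. Qed.

Lemma slots_ok_run (st : state) e n :
  slots_ok st.1 st.2 -> slots_ok (run st e n).1 (run st e n).2.
Proof. by move=> ok; elim: n => //= n /slots_ok_active/slots_ok_next. Qed.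

Lemma witness_slot_exists m f t : slots_ok m f -> needed m t ->
  exists s, witness_slot m f t = Some s.
Proof.
move=> ok need; rewrite /witness_slot need.
case no_reuse: (reusable m f t) => [s|]; first by exists s.
have [q init_q win_q] : exists2 q : nstate (Aut_t t), ninit q & winning (lab t) m q.
  apply: (winning_initial (Aut_body (Eform_in t)) (m := m)).
  by move/asboolP: need; rewrite /holds /state_sat {1}Eform_E.
have [q' fresh_q'] : exists q', fresh_state m t = Some q'.
  rewrite /fresh_state; case: pickP => [q' _|/(_ q)]; first by exists q'.
  by rewrite init_q => /asboolP.
have [s free_s] := free_slot_exists ok no_reuse fresh_q'.
by exists s; rewrite /new_track need no_reuse free_s fresh_q'.
Qed.

Lemma witness_slot_active m f t s : witness_slot m f t = Some s ->
  exists2 c, active m f s = Some c & tag c = t /\ accepting_track m c.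
Proof.
rewrite /witness_slot; case: (needed m t) => //.
case reuse: (reusable m f t) => [s'|].
  move=> [<-]; move: reuse; rewrite /reusable; case: pickP => // s'' + [<-].
  by case fs: (f s'') => [c|] // /andP[/eqP tc acc]; exists c; rewrite /active ?fs.
case new: (new_track m f t) => [[s' c]|] //= [<-].
have [_ _ ts fs [q cq [init_q win_q]]] := new_trackP new.
exists c; first by rewrite /active fs ts new eqxx.
by rewrite cq; split=> //; apply/asboolP; apply: accepts_play.
Qed.

Lemma prime_form_of_csat (f : form I O) : all (mem (subformulas Phi)) (subformulas f) ->
  forall (st : state) e, slots_ok st.1 st.2 ->
  csat (comp_tree (restart st.1)) f [::] e -> lsat (prime f) (comp st e).
Proof.
have shift g (st : state) e n : (forall (st : state) e, slots_ok st.1 st.2 ->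
      csat (comp_tree (restart st.1)) g [::] e -> lsat (prime g) (comp st e)) ->
    slots_ok st.1 st.2 -> csat (comp_tree (restart st.1)) g (mkseq e n) (sfx e n) ->
    lsat (prime g) (sfx (comp st e) n).
  move=> IH ok; rewrite csat_restart foldl_mtrans_mkseq computation_restart_sfx.
  by move=> H; apply: (IH (run st e n)); [exact: slots_ok_run|rewrite run_fst].
elim: f => //= [a IHa b IHb|a IHa b IHb|a IHa|a IHa b IHb|a IHa b IHb|a IHa|a IHa] /andP[Hf];
  rewrite ?all_cat; [move=> /andP[Ha Hb]|move=> /andP[Ha Hb]|move=> Ha|
  move=> /andP[Ha Hb]|move=> /andP[Ha Hb]|move=> Ha|move=> Ha] => st e ok.
- by case; split; [exact: IHa|exact: IHb].
- by case; [left; exact: IHa|right; exact: IHb].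
- exact: (shift a st e 1 (IHa Ha)).
- move=> [n [Hbn Ham]]; exists n; split; first exact: shift (IHb Hb) ok Hbn.
  by move=> j /Ham; apply: shift (IHa Ha) ok.
- move=> H n; case: (H n) => [Hbn|[j [lt_jn Haj]]].
    by left; apply: shift (IHb Hb) ok Hbn.
  by right; exists j; split=> //; apply: shift (IHa Ha) ok Haj.
- by move=> Hall; rewrite /pval insubT ?mem_Funiv ?Hf //= => ?; apply/asboolP.
- move=> Hex; rewrite /vval insubT ?mem_Fexist ?Hf //= => HE.
  have need : needed st.1 (index_E (exist _ (FE a) HE)).
    by apply/asboolP; rewrite Eform_index_E.
  by have [s ->] := witness_slot_exists ok need.
Qed.

Lemma subformulas_body t : all (mem (subformulas Phi)) (subformulas (body (Eform t))).
Proof. by move: (Eform_in t); rewrite mem_Fexist => /andP[/body_subformulas]. Qed.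

Lemma tinput_along m c n :
  tinput (mrun (restart m) (tinput m c) n) (tstate m c n) 0 = tinput m c n.
Proof. by rewrite -play_fst. Qed.

Lemma tstate_along m c n :
  tstate (mrun (restart m) (tinput m c) n) (tstate m c n) 1 = tstate m c n.+1.
Proof. by rewrite -play_fst. Qed.

Lemma follow_slot (st : state) e s c :
  active st.1 st.2 s = Some c ->
  (forall n, lsat (d_atom Fe Fu (index_of_track s)) (sfx (comp st e) n)) ->
  e = tinput st.1 c.
Proof.
move=> act_s follow_d.
suff agree n : (forall j, j < n -> e j = tinput st.1 c j) /\
    active (run st e n).1 (run st e n).2 s = Some (tstate st.1 c n).
  by apply: funext => n; have [/(_ n (ltnSn n))] := agree n.+1.
elim: n => [|n [prefix act_n]]; first by rewrite tstate0.
have state_n : (run st e n).1 = mrun (restart st.1) (tinput st.1 c) n.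
  by rewrite run_fst (eq_mrun (restart st.1) prefix).
have e_n : e n = tinput st.1 c n.
  move: (follow_d n); rewrite /= addn0 index_of_trackK act_n state_n tinput_along.
  by move/eqP.
split=> [j|]; first by rewrite ltnS leq_eqVlt => /orP[/eqP->|/prefix].
rewrite /= {1}/active ffunE act_n state_n tinput_along e_n eqxx tstate_along.
by [].
Qed.

Lemma exist_conjunct (st : state) e g (i : 'I_k) : slots_ok st.1 st.2 -> g \in Fe ->
  vval (comp st e 0) g = i.+1 ->
  (forall n, lsat (d_atom Fe Fu i) (sfx (comp st e) n)) ->
  lsat (prime (body g)) (comp st e).
Proof.
move=> ok Hg; rewrite /vval insubT /=.
case wit: (witness_slot _ _ _) => [s|] // [idx_s] follow_d.
have [c act_s [tc /asboolP acc_c]] := witness_slot_active wit.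
have idx : index_of_track s = i by apply: val_inj.
rewrite -idx in follow_d; rewrite (follow_slot act_s follow_d).
move/(accepts_word (Aut_body (Eform_in (tag c)))): acc_c.
by move/(prime_form_of_csat (subformulas_body _) ok); rewrite tc Eform_index_E.
Qed.

Lemma ltl_machine_realises : is_state Phi -> state_sat (comp_tree M) Phi [::] ->
  forall e, lsat (Phi_LTL Phi k) (computation ltl_machine e).
Proof.
move=> st_Phi sat_Phi e; rewrite -computation_restart_minit.
have ok0 : slots_ok (minit ltl_machine).1 (minit ltl_machine).2.
  by split=> [s c|s1 s2 c1 c2 _]; rewrite ffunE.
have ok n := slots_ok_run e n ok0.
split; [|split].
- by apply: prime_form_of_csat ok0 (csat_state_path _ st_Phi sat_Phi); apply/allP.
- apply/lsat_LBigAnd_allpairs => g i Hg _; apply/lsat_G => n.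
  rewrite computation_restart_sfx !lsat_Imp => /eqP v_g /lsat_G follow_d.
  exact: exist_conjunct (ok n) Hg v_g follow_d.
apply/lsat_LBigAnd_map => g Hg; apply/lsat_G => n.
rewrite computation_restart_sfx lsat_Imp /= /pval insubT /= => /asboolP.
move: Hg; rewrite mem_Funiv => /andP[/body_subformulas]; case: g => // a sub_a _ Hall.
exact: prime_form_of_csat sub_a _ _ (ok n) (Hall (sfx e n)).
Qed.

End CTLtoLTL.

Lemma ltl_realisable_of_ctl (I O : finType) (Phi : form I O)
    (Aut : forall g : form I O, nba (nletter (body g))) :
  (forall g, g \in Fexist Phi -> nba_for (Aut g)) -> is_state Phi ->
  ctl_realisable Phi -> ltl_realisable (Phi_LTL Phi (k_of Phi Aut)).
Proof.
move=> Aut_body st_Phi [M sat_Phi]; exists (ltl_machine Phi Aut M).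
exact: ltl_machine_realises.
Qed.

Theorem mainTheorem5 (I O : finType) (Phi : form I O)
  (HPhi : is_state Phi)
  (Aut : forall g : form I O, nba (nletter (body g)))
  (HAut : forall g, g \in Fexist Phi -> nba_for (Aut g)) :
  ctl_realisable Phi <->
  ltl_realisable (Phi_LTL Phi (k_of Phi Aut)).
Proof.
split; [exact: ltl_realisable_of_ctl|exact: ctl_realisable_of_ltl].
Qed.
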